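(* Let $\boldsymbol\lambda$ be a partition with at most $N$ parts and let $F_{ij}\in\mathcal O_{\boldsymbol\lambda}$ be as defined in the context. Then the elements $F_{ij}$, $i=1,\dots,N$, $j=i+1,i+2,\dots$, generate the algebra $\mathcal O_{\boldsymbol\lambda}$.
   Context: A partition with at most $N$ parts is a sequence of integers $\lambda_1\ge\dots\ge\lambda_N\ge0$. Put $d_i=\lambda_i+N-i$ and $P=\{d_1,\dots,d_N\}$. Let $\mathcal O_{\boldsymbol\lambda}=\mathbb C[f_{ij}:1\le i\le N,\ 1\le j\le d_i,\ d_i-j\notin P]$ be the polynomial algebra in the indicated variables, and $f_i(u)=u^{d_i}+\sum_{1\le j\le d_i,\ d_i-j\notin P}f_{ij}u^{d_i-j}$. Let $\operatorname{Wr}(g_1,\dots,g_N)=\det(g_i^{(j-1)})_{i,j=1}^N$. For a square matrix with possibly noncommuting entries, $\operatorname{rdet}A=\sum_\sigma\operatorname{sgn}(\sigma)a_{1\sigma(1)}a_{2\sigma(2)}\cdots$. With $\partial=d/du$, define $\mathcal D^{\mathcal O}_{\boldsymbol\lambda}=\frac1{\operatorname{Wr}(f_1,\dots,f_N)}\operatorname{rdet}\begin{pmatrix}f_1&f_1'&\dots&f_1^{(N)}\\ \vdots&&&\vdots\\ f_N&f_N'&\dots&f_N^{(N)}\\ 1&\partial&\dots&\partial^N\end{pmatrix}=\partial^N+\sum_{i=1}^NF_i(u)\partial^{N-i}$; the top coefficient of the Wronskian is a nonzero constant, so $F_i(u)=\sum_{j\ge1}F_{ij}u^{-j}$ with $F_{ij}\in\mathcal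 O_{\boldsymbol\lambda}$. *)

From mathcomp Require Import all_boot all_fingroup all_algebra.
From mathcomp Require Import Rstruct complex.
From mathcomp Require Import mpoly.
Set Implicit Arguments. Unset Strict Implicit. Unset Printing Implicit Defensive.
Import GRing.Theory.
Local Open Scope ring_scope.

Definition Cplx : numClosedFieldType := (Rdefinitions.R)[i].

Section Setup.
Variables (N : nat) (lam : 'I_N -> nat).

(* A partition with at most N parts: lam_1 >= ... >= lam_N >= 0.
   Indices are 0-based: the paper's index i corresponds to i.+1 here. *)
Definition is_partition : Prop := forall i j : 'I_N, (i <= j)%N -> (lam j <= lam i)%N.

(* d_i = lam_i + N - i  (paper, 1-based) = lam_i + (N - 1 - i) (0-based) *)
Definition dd (i : 'I_N) : nat := (lam i + (N - i.+1))%N.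

Definition inP (m : nat) : bool := [exists i : 'I_N, dd i == m].

Definition valid_idx (x : {i : 'I_N & 'I_(dd i).+1}) : bool :=
  (0 < (tagged x : nat))%N && ~~ inP (dd (tag x) - tagged x).

Definition Idx := {x : {i : 'I_N & 'I_(dd i).+1} | valid_idx x}.

(* O_lambda : polynomial algebra over C in the variables f_{ij}, (i,j) in Idx *)
Definition Olam := {mpoly Cplx[#|{: Idx}|]}.

Definition fvar (x : Idx) : Olam := 'X_(enum_rank x).

Definition fpoly (i : 'I_N) : {poly Olam} :=
  'X^(dd i) + \sum_(x : Idx | tag (val x) == i)
                 (fvar x)%:P * 'X^(dd i - tagged (val x)).

Definition Wr : {poly Olam} := \det (\matrix_(i < N, j < N) (fpoly i)^`(j)).

(* The (N+1)x(N+1) matrix whose first N rows are (f_i, f_i', ..., f_i^{(N)})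
   and whose last row is (1, d, ..., d^N).  Since only the last row has
   noncommuting entries (which sit rightmost in each rdet monomial),
   rdet = sum_k coefD k * d^k, where coefD k is the sum over permutations
   s with s(last) = k of sgn(s) prod_{r < N} f_r^{(s r)}.                   *)
Definition coefD (k : 'I_N.+1) : {poly Olam} :=
  \sum_(s : 'S_N.+1 | s ord_max == k)
     (-1) ^+ s * \prod_(r < N) (fpoly r)^`(s (widen_ord (leqnSn N) r)).

(* Thus D = d^N + sum_i F_i(u) d^{N-i}, with F_i(u) = coefD (N - i) / Wr
   (note coefD N = Wr).  For 1 <= i <= N: *)
Definition numF (i : nat) : {poly Olam} := coefD (inord (N - i)).

End Setup.

(* g : nat -> R (g 0 unused) is the sequence of coefficients of the
   expansion  c(u) / W(u) = sum_{j >= 1} g_j u^{-j}  at u = infinity, i.e.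
   W(u) * (sum_{j>=1} g_j u^{-j}) = c(u) as formal Laurent series in u^{-1}:
   - coefficient of u^n, n >= 0 :  sum_{j >= 1} W_{n+j} g_j = c_n
   - coefficient of u^{-n}, n >= 1 : sum_{k >= 0} W_k g_{k+n} = 0          *)
Definition laurent_expansion (R : comNzRingType) (c W : {poly R}) (g : nat -> R) : Prop :=
  (forall n : nat, \sum_(1 <= j < (size W).+1) W`_(n + j) * g j = c`_n) /\
  (forall n : nat, (0 < n)%N -> \sum_(k < size W) W`_k * g (k + n)%N = 0).

Inductive in_gen_subalg (n : nat) (S : {mpoly Cplx[n]} -> Prop)
  : {mpoly Cplx[n]} -> Prop :=
| gen_const (c : Cplx) : in_gen_subalg S c%:MP
| gen_elem (p : {mpoly Cplx[n]}) : S p -> in_gen_subalg S p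
| gen_add (p q : {mpoly Cplx[n]}) :
    in_gen_subalg S p -> in_gen_subalg S q -> in_gen_subalg S (p + q)
| gen_mul (p q : {mpoly Cplx[n]}) :
    in_gen_subalg S p -> in_gen_subalg S q -> in_gen_subalg S (p * q).

(* Each f_t is killed by the operator D, so W * D f_t = 0.  Multiply D by u^M
   and truncate the Laurent series F_i(u) after their polynomial part: the
   resulting operator L has polynomial coefficients built from the F_ij, and
   W * L f_t only involves the truncation errors, which have small degree, so
   deg L f_t < d_t.  The coefficient of u^(M - N + d_t - j) of L f_t then reads
   I(d_t - j) f_{t,j} + (polynomial in the F_ij, j > i, and the f_{t,j'},
   j' < j) = 0, with the indicial polynomial
   I(m) = m^(N) + sum_i F_ii m^(N - i)  (falling factorials).
   I vanishes at the N distinct exponents d_1, ..., d_N (the case j = 0) and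
   is monic of degree N in m, so I(m) = prod_t (m - d_t), a nonzero constant
   when m is not in P; induction on j then puts every f_{t,j} in the subalgebra
   generated by the F_ij.
   The F_ij with j < i vanish because deg (W F_i) <= deg W - i. *)
From Pilot Require Import Defs.
From mathcomp Require Import all_boot all_fingroup all_algebra.
From mathcomp Require Import Rstruct complex.
From mathcomp Require Import mpoly.
From mathcomp Require Import zify.
Set Implicit Arguments. Unset Strict Implicit. Unset Printing Implicit Defensive.
Import GRing.Theory.
Local Open Scope ring_scope.

Section PolySize.
Variable R : nzRingType.
Implicit Types p q : {poly R}.

Lemma leq_size_sum (I : Type) (r : seq I) (P : pred I) (G : I -> {poly R}) n :
  (forall i, P i -> (size (G i) <= n)%N) -> (size (\sum_(i <- r | P i) G i)%R <= n)%N.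
Proof.
move=> H; apply/leq_sizeP => e He; rewrite coef_sum big1 // => i Pi.
by apply: (leq_sizeP _ _ (H i Pi)).
Qed.

Lemma coefM_top p q a b : (size p <= a.+1)%N -> (size q <= b.+1)%N ->
  (p * q)`_(a + b) = p`_a * q`_b.
Proof.
move=> Hp Hq; have Ha : (a < (a + b).+1)%N by lia.
rewrite coefM (bigD1 (Ordinal Ha)) //= (_ : (a + b - a = b)%N); last by lia.
rewrite big1 ?addr0 // => i /eqP Hi.
have [ltia|leai] := ltnP i a.
  by rewrite [q`__](leq_sizeP _ _ Hq) ?mulr0 //; lia.
rewrite [p`__](leq_sizeP _ _ Hp) ?mul0r //.
have : nat_of_ord i <> a by move=> E; apply: Hi; apply: val_inj.
lia.
Qed.

Lemma leq_size_mul p q a b : (size p <= a.+1)%N -> (size q <= b.+1)%N ->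
  (size (p * q)%R <= (a + b).+1)%N.
Proof. by move=> Hp Hq; apply: leq_trans (size_polyMleq p q) _; lia. Qed.

Lemma size_prod_top n (G : 'I_n -> {poly R}) (e : 'I_n -> nat) :
  (forall r, (size (G r) <= (e r).+1)%N) ->
  (size (\prod_(r < n) G r)%R <= (\sum_(r < n) e r).+1)%N /\
  (\prod_(r < n) G r)`_(\sum_(r < n) e r) = \prod_(r < n) (G r)`_(e r).
Proof.
elim: n G e => [|n IH] G e H; first by rewrite !big_ord0 size_poly1 coef1.
rewrite !big_ord_recr /=.
have [H1 H2] := IH (fun r => G (widen_ord (leqnSn n) r))
                   (fun r => e (widen_ord (leqnSn n) r)) (fun r => H _).
by split; [exact: leq_size_mul|rewrite coefM_top // H2].
Qed.

Lemma coefM_derivn_Xn q e m K :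
  (q * ('X^e)^`(m))`_K = (e ^_ m)%:R * (if (e - m <= K)%N then q`_(K - (e - m)) else 0).
Proof.
rewrite derivnXn mulrnAr coefMn coefMXn.
by case: (ltnP K (e - m)) => H; rewrite ?mul0rn ?mulr0 // mulr_natl.
Qed.

End PolySize.

Lemma leq_size_mulKl (R : idomainType) (W p : {poly R}) K : W != 0 ->
  (size (W * p)%R <= (size W).-1 + K)%N -> (size p <= K)%N.
Proof.
move=> W0; have [->|p0] := eqVneq p 0; first by rewrite size_poly0.
rewrite size_mul // => H.
have : (0 < size W)%N by rewrite size_poly_gt0.
lia.
Qed.

Lemma big_ord_trunc (R : nmodType) (G : nat -> R) n m : (n <= m)%N ->
  (forall i, (n <= i < m)%N -> G i = 0) -> \sum_(i < m) G i = \sum_(i < n) G i.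
Proof.
move=> Hnm H; rewrite -!(big_mkord xpredT) (big_cat_nat (leq0n n) Hnm) /=.
rewrite [X in _ + X]big_nat_cond [X in _ + X]big1 ?addr0 // => i /andP[Hi _].
exact: H.
Qed.

Lemma sum_perm_val n (s : 'S_n) : (\sum_(i < n) (s i : nat) = 'C(n, 2))%N.
Proof. by rewrite -bin2_sum big_mkord [in RHS](reindex_inj (@perm_inj _ s)). Qed.

Section LaurentTruncation.
Variable R : comNzRingType.

(* u^M times the part of sum_(j >= 1) g_j u^(-j) with j <= M *)
Definition laurent_trunc (g : nat -> R) (M : nat) : {poly R} :=
  \poly_(b < M) g (M - b)%N.

Lemma size_laurent_trunc_err (c W : {poly R}) g M :
  laurent_expansion c W g -> (size W <= M)%N ->
  (size (W * laurent_trunc g M - 'X^M * c)%R <= (size W).-1)%N.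
Proof.
(* Coefficient e of W * laurent_trunc g M is the coefficient of u^(e - M) in
   W(u) * sum_(1 <= j <= M) g_j u^(-j), and size W <= M makes the cut j <= M
   harmless in the relations of laurent_expansion. *)
move=> [Hpos Hneg] HM; apply/leq_sizeP => e He.
rewrite coefB coefXnM coefM.
have HW i : (size W <= i)%N -> W`_i = 0 by apply: nth_default.
have [HeM|HMe] := ltnP e M.
  rewrite subr0 -[RHS](Hneg (M - e)%N); last by lia.
  rewrite (@big_ord_trunc _ (fun a => W`_a * (laurent_trunc g M)`_(e - a)) (size W) e.+1);
    [|lia|by move=> i /andP[Hi _]; rewrite HW ?mul0r].
  apply: eq_bigr => i _; rewrite coef_poly ifT; last by lia.
  by congr (_ * g _); have := ltn_ord i; lia.
apply/eqP; rewrite subr_eq0; apply/eqP; rewrite -(Hpos (e - M)%N).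
rewrite -(big_mkord xpredT (fun j => W`_j * (laurent_trunc g M)`_(e - j))).
rewrite (@big_cat_nat _ _ _ (e - M).+1 0 e.+1) //=; last by lia.
rewrite big_nat_cond big1 ?add0r; last first.
  by move=> i /andP[/andP[_ Hi] _]; rewrite coef_poly ifF ?mulr0 //; lia.
rewrite (big_addn 0 e.+1 (e - M).+1) (_ : (e.+1 - (e - M).+1)%N = M); last by lia.
rewrite (big_addn 0 (size W).+1 1) (_ : ((size W).+1 - 1)%N = size W); last by lia.
rewrite [in RHS]big_mkord [in LHS]big_mkord.
rewrite (@big_ord_trunc _
  (fun i => W`_(i + (e - M).+1) * (laurent_trunc g M)`_(e - (i + (e - M).+1))) (size W) M HM);
  last by move=> i /andP[Hi _]; rewrite HW ?mul0r //; lia.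
apply: eq_bigr => i _; rewrite coef_poly ifT; last by have := ltn_ord i; lia.
by congr (W`__ * g _); have := ltn_ord i; lia.
Qed.

End LaurentTruncation.

Lemma laurent_expansion_low (R : idomainType) (c W : {poly R}) g i j :
  laurent_expansion c W g -> W != 0 -> (size c <= size W - i)%N ->
  (1 <= j < i)%N -> g j = 0.
Proof.
move=> Hg W0 Hc Hj; pose M := (size W + i)%N.
have Herr := size_laurent_trunc_err Hg (leq_addr i (size W) : (size W <= M)%N).
have HWT : (size (W * laurent_trunc g M)%R <= (size W).-1 + (M + 1 - i))%N.
  rewrite -[W * _](subrK ('X^M * c)).
  apply: leq_trans (size_polyD _ _) _; rewrite geq_max; apply/andP; split.
    exact: leq_trans Herr (leq_addr _ _).
  have [->|c0] := eqVneq c 0; first by rewrite mulr0 size_poly0.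
  apply: leq_trans (size_polyMleq _ _) _; rewrite size_polyXn /M.
  have : (0 < size c)%N by rewrite size_poly_gt0.
  lia.
have := leq_sizeP _ _ (leq_size_mulKl W0 HWT) (M - j)%N.
rewrite coef_poly ifT; last by lia.
by rewrite (_ : (M - (M - j) = j)%N); [apply; lia|lia].
Qed.

Definition ffpoly (R : nzRingType) (r : nat) : {poly R} := \prod_(k < r) ('X - k%:R%:P).

Lemma size_ffpoly (R : nzRingType) r : size (ffpoly R r) = r.+1.
Proof.
by rewrite /ffpoly -big_filter size_prod_XsubC size_filter count_predT
  [index_enum _]unlock -enumT size_enum_ord.
Qed.

Lemma monic_ffpoly (R : nzRingType) r : ffpoly R r \is monic.
Proof. by rewrite /ffpoly -big_filter monic_prod_XsubC. Qed.

Lemma horner_ffpoly (R : comNzRingType) m r : (ffpoly R r).[m%:R] = (m ^_ r)%:R.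
Proof.
rewrite /ffpoly horner_prod ffact_prod natr_prod.
have [Hr|Hr] := leqP r m.
  by apply: eq_bigr => k _; rewrite hornerXsubC natrB //; have := ltn_ord k; lia.
rewrite (bigD1 (Ordinal Hr)) //= hornerXsubC subrr mul0r.
by rewrite (bigD1 (Ordinal Hr)) //= subnn mul0r.
Qed.

Definition indicial (R : nzRingType) (N : nat) (G : nat -> R) : {poly R} :=
  ffpoly R N + \sum_(1 <= i < N.+1) (G i)%:P * ffpoly R (N - i).

Lemma horner_indicial (R : comNzRingType) N (G : nat -> R) m :
  (indicial N G).[m%:R] = (m ^_ N)%:R + \sum_(1 <= i < N.+1) (m ^_ (N - i))%:R * G i.
Proof.
rewrite hornerD horner_sum horner_ffpoly; congr (_ + _).
by apply: eq_bigr => i _; rewrite hornerCM horner_ffpoly mulrC.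
Qed.

Lemma size_indicial_tail (R : nzRingType) N (G : nat -> R) :
  (size (\sum_(1 <= i < N.+1) (G i)%:P * ffpoly R (N - i))%R <= N)%N.
Proof.
rewrite big_nat_cond; apply: leq_size_sum => i /andP[/andP[H1 H2] _].
apply: leq_trans (size_polyMleq _ _) _; rewrite size_ffpoly.
have := size_polyC_leq1 (G i); lia.
Qed.

Lemma roots_prod_XsubC_factor (R : idomainType) (p : {poly R}) (rs : seq R) :
  all (root p) rs -> uniq rs -> exists q, p = q * \prod_(z <- rs) ('X - z%:P).
Proof.
elim: rs => [|z rs IH] /=; first by exists p; rewrite big_nil mulr1.
case/andP => rz rrs /andP[zrs urs]; have [q Hq] := IH rrs urs.
have : root q z.
  move: rz; rewrite /root Hq hornerM horner_prod mulf_eq0 => /orP[//|/eqP H0].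
  exfalso; move: H0; apply/eqP; rewrite prodf_seq_neq0; apply/allP => y yrs /=.
  by rewrite hornerXsubC subr_eq0; apply: contraNneq zrs => ->.
by case/factor_theorem => q' Hq'; exists q'; rewrite Hq Hq' big_cons mulrA.
Qed.

Lemma monic_eq_prod_roots (R : idomainType) (p : {poly R}) (rs : seq R) :
  p \is monic -> size p = (size rs).+1 -> all (root p) rs -> uniq rs ->
  p = \prod_(z <- rs) ('X - z%:P).
Proof.
move=> mp sp rp urs; have [q Hq] := roots_prod_XsubC_factor rp urs.
have Hm : \prod_(z <- rs) ('X - z%:P) \is monic by apply: monic_prod_XsubC.
have Hs : size (\prod_(z <- rs) ('X - z%:P)) = (size rs).+1 by apply: size_prod_XsubC.
have q0 : q != 0.
  by apply: contraTneq mp => q0; rewrite Hq q0 mul0r monicE lead_coef0 eq_sym oner_eq0.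
have sq : size q = 1%N.
  move: sp; rewrite Hq size_Mmonic // Hs.
  have : (0 < size q)%N by rewrite size_poly_gt0.
  by move: (size q) => k; lia.
have [c Hc] : exists c, q = c%:P by exists q`_0; apply: size1_polyC; rewrite sq.
have : lead_coef p = 1 by apply/eqP.
by rewrite Hq lead_coefM Hc lead_coefC (eqP Hm) mulr1 => c1; rewrite c1 mul1r.
Qed.

Lemma indicial_prod_roots (R : idomainType) N (G : nat -> R) (rs : seq R) :
  size rs = N -> all (root (indicial N G)) rs -> uniq rs ->
  indicial N G = \prod_(z <- rs) ('X - z%:P).
Proof.
move=> Hs; apply: monic_eq_prod_roots.
  rewrite monicE lead_coefDl ?size_ffpoly ?ltnS ?size_indicial_tail //.
  by rewrite -monicE monic_ffpoly.
by rewrite size_polyDl ?size_ffpoly ?ltnS ?size_indicial_tail ?Hs.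
Qed.

Section GeneratedSubalgebra.
Variables (n : nat) (S : {mpoly Cplx[n]} -> Prop).
Local Notation gen := (in_gen_subalg S).

Lemma gen_natr k : gen k%:R.
Proof. rewrite -mpolyC_nat; exact: gen_const. Qed.

Lemma gen0 : gen 0.
Proof. by rewrite -mpolyC0; exact: gen_const. Qed.

Lemma gen1 : gen 1.
Proof. by rewrite -mpolyC1; exact: gen_const. Qed.

Lemma gen_opp p : gen p -> gen (- p).
Proof. by move=> Hp; rewrite -mulN1r -mpolyC1 -mpolyCN; apply: gen_mul (gen_const _ _) Hp. Qed.

Lemma gen_sum (I : Type) (r : seq I) (P : pred I) (G : I -> {mpoly Cplx[n]}) :
  (forall i, P i -> gen (G i)) -> gen (\sum_(i <- r | P i) G i).
Proof. by move=> H; apply: big_ind => //; [exact: gen0|exact: gen_add]. Qed.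

Lemma gen_of_vars : (forall i : 'I_n, gen 'X_i) -> forall p, gen p.
Proof.
move=> HX p; elim/mpolyind: p => [|c m p _ _ IH]; first exact: gen0.
apply: gen_add => //; rewrite -mul_mpolyC; apply: gen_mul; first exact: gen_const.
rewrite mpolyXE_id; apply: big_ind; [exact: gen1|exact: gen_mul|] => i _.
by elim: (m i) => [|k IHk]; rewrite ?expr0 ?exprS; [exact: gen1|exact: gen_mul].
Qed.

End GeneratedSubalgebra.

Lemma natr_mpoly_inj n (a b : nat) : (a%:R : {mpoly Cplx[n]}) = b%:R -> a = b.
Proof.
move/(congr1 (mcoeff 0)); rewrite -!mpolyC_nat !mcoeffC eqxx !mulr1.
by move/eqP; rewrite Num.Theory.eqr_nat => /eqP.
Qed.

Section Wronskian.
Variables (N : nat) (lam : 'I_N -> nat).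
Local Notation R := (Olam lam).
Local Notation f := (fpoly lam).
Local Notation d := (dd lam).

Lemma dd_inj : is_partition lam -> injective d.
Proof.
move=> Hp i j; rewrite /dd => E; apply: val_inj; apply/eqP.
have := ltn_ord i; have := ltn_ord j.
have [Hij|Hij|//] := ltngtP i j.
  by have := Hp i j (ltnW Hij); move: E Hij; move: (lam i) (lam j) (i : nat) (j : nat); lia.
by have := Hp j i (ltnW Hij); move: E Hij; move: (lam i) (lam j) (i : nat) (j : nat); lia.
Qed.

Lemma coef_fpoly r e : (f r)`_e = (e == d r)%:R +
  \sum_(x : Idx lam | tag (val x) == r) fvar x * (e == (d r - tagged (val x))%N)%:R.
Proof.
rewrite /fpoly coefD coefXn coef_sum; congr (_ + _).
by apply: eq_bigr => x _; rewrite coefCM coefXn.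
Qed.

Lemma coef_fpoly_high r e : (d r <= e)%N ->
  (f r)`_e = (e == d r)%:R.
Proof.
move=> He; rewrite coef_fpoly big1 ?addr0 // => -[[t j] Hv] /= /eqP Ht; subst t.
have /andP[/= Hj _] := Hv.
rewrite (_ : (_ == _) = false) ?mulr0 //; apply/negbTE/eqP.
by have := ltn_ord j; lia.
Qed.

Lemma lead_fpoly r : (f r)`_(d r) = 1.
Proof. by rewrite coef_fpoly_high // eqxx. Qed.

Lemma size_fpoly r : (size (f r) <= (d r).+1)%N.
Proof.
apply/leq_sizeP => e He; rewrite coef_fpoly_high; last by lia.
by rewrite (_ : (e == d r) = false) //; apply/negbTE/eqP; lia.
Qed.

Lemma size_derivn_fpoly r m : (size ((f r)^`(m)) <= (d r - m).+1)%N.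
Proof.
apply/leq_sizeP => e He; rewrite coef_derivn.
by rewrite (leq_sizeP _ _ (size_fpoly r)) ?mul0rn //; lia.
Qed.

Lemma lead_derivn_fpoly r m : ((f r)^`(m))`_(d r - m) = ((d r) ^_ m)%:R.
Proof.
rewrite coef_derivn; have [Hm|Hm] := leqP m (d r); first by rewrite subnKC // lead_fpoly.
rewrite (_ : (m + (d r - m) = m)%N); last by lia.
by rewrite (leq_sizeP _ _ (size_fpoly r)) // mul0rn ffact_small.
Qed.

Lemma derivn_fpoly_eq0 r m : (d r < m)%N -> (f r)^`(m) = 0.
Proof. by move=> H; apply: derivn_poly0; apply: leq_trans (size_fpoly r) _. Qed.

Definition rdet_mx (v : 'I_N.+1 -> {poly R}) : 'M[{poly R}]_N.+1 :=
  \matrix_(i, j) (match unlift ord_max i with Some r => (f r)^`(j) | None => v j end).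

Lemma unlift_widen (r : 'I_N) : unlift ord_max (widen_ord (leqnSn N) r) = Some r.
Proof.
have -> : widen_ord (leqnSn N) r = lift ord_max r by apply: val_inj; rewrite [RHS]lift_max.
exact: liftK.
Qed.

Lemma det_rdet_mx v : \det (rdet_mx v) = \sum_(k < N.+1) Defs.coefD lam k * v k.
Proof.
rewrite /determinant (partition_big (fun s : 'S_N.+1 => s ord_max) xpredT) //=.
apply: eq_bigr => k _; rewrite /Defs.coefD big_distrl /=.
apply: eq_big => [s|s /eqP Hs] //.
rewrite big_ord_recr /= mxE unlift_none Hs mulrA; congr (_ * _ * _).
by apply: eq_bigr => r _; rewrite mxE unlift_widen.
Qed.

Lemma coefD_derivn_fpoly t : \sum_(k < N.+1) Defs.coefD lam k * (f t)^`(k) = 0.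
Proof.
rewrite -det_rdet_mx; apply: (@determinant_alternate _ _ _ (widen_ord (leqnSn N) t) ord_max).
  by rewrite -(inj_eq val_inj) /= neq_ltn ltn_ord.
by move=> j; rewrite !mxE unlift_widen unlift_none.
Qed.

Lemma coefD_max : Defs.coefD lam ord_max = Wr lam.
Proof.
have := det_rdet_mx (fun j => (j == ord_max)%:R).
rewrite (bigD1 ord_max) //= eqxx mulr1 big1 ?addr0; last first.
  by move=> k /negPf ->; rewrite mulr0.
move=> <-; rewrite (expand_det_row _ ord_max) (bigD1 ord_max) //= big1 ?addr0; last first.
  by move=> k /negPf Hk; rewrite mxE unlift_none Hk mul0r.
rewrite mxE unlift_none eqxx mul1r /cofactor addnn -signr_odd odd_double expr0 mul1r.
by congr (\det _); apply/matrixP => i j; rewrite !mxE liftK lift_max.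
Qed.

Lemma Wr_D_fpoly t :
  Wr lam * (f t)^`(N) + \sum_(1 <= i < N.+1) numF lam i * (f t)^`(N - i) = 0.
Proof.
rewrite -[RHS](coefD_derivn_fpoly t) big_ord_recr /= coefD_max addrC; congr (_ + _).
transitivity (\sum_(k < N) Defs.coefD lam (inord k) * (f t)^`(k)); last first.
  apply: eq_bigr => k _; congr (Defs.coefD lam _ * _).
  by apply: val_inj; rewrite /= inordK //; apply: leqW.
rewrite -(big_mkord xpredT (fun k => Defs.coefD lam (inord k) * (f t)^`(k))).
rewrite big_nat_rev (big_add1 _ _ 0 N.+1) /=.
apply: eq_big_nat => i /andP[_ Hi].
rewrite /numF (_ : (1 + N.+1 - i.+2 = N - i)%N); last by lia.
by rewrite (_ : (N - (N - i) = i)%N); last by lia.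
Qed.

Definition sum_dd := (\sum_(r < N) d r)%N.
Definition Wr_deg := (sum_dd - 'C(N, 2))%N.

Lemma size_coefD k : (size (Defs.coefD lam k) <= (sum_dd + k).+1 - 'C(N.+1, 2))%N.
Proof.
rewrite /Defs.coefD; apply: leq_size_sum => s /eqP Hs; rewrite size_Msign.
set w := widen_ord (leqnSn N).
have [/existsP[r Hr]|/existsPn Hall] := boolP [exists r, (d r < s (w r))%N].
  by rewrite (bigD1 r) //= derivn_fpoly_eq0 // mul0r size_poly0.
have [Hsize _] := size_prod_top (fun r => size_derivn_fpoly r (s (w r))).
apply: leq_trans Hsize _.
have E1 : (\sum_(r < N) (d r - s (w r)) + \sum_(r < N) s (w r) = sum_dd)%N.
  rewrite /sum_dd -big_split /=; apply: eq_bigr => r _.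
  by rewrite subnK // leqNgt Hall.
have E2 : (\sum_(r < N) s (w r) + k = 'C(N.+1, 2))%N.
  by rewrite -(sum_perm_val s) big_ord_recr /= Hs.
lia.
Qed.

Lemma coef_Wr_deg :
  (Wr lam)`_Wr_deg = \det (\matrix_(i < N, j < N) ((d i) ^_ j)%:R : 'M[R]_N).
Proof.
rewrite /Wr /determinant coef_sum; apply: eq_bigr => s _.
suff key : (\prod_i (\matrix_(i < N, j < N) (f i)^`(j)) i (s i))`_Wr_deg =
          \prod_i (\matrix_(i < N, j < N) ((d i) ^_ j)%:R : 'M[R]_N) i (s i).
  by case: (perm.odd_perm s); rewrite /= ?expr1 ?expr0 ?mulN1r ?mul1r ?coefN key.
have [/existsP[r Hr]|/existsPn Hall] := boolP [exists r, (d r < s r)%N].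
  rewrite (bigD1 r) //= mxE derivn_fpoly_eq0 // mul0r coef0.
  by rewrite (bigD1 r) //= mxE ffact_small // mul0r.
under eq_bigr do rewrite mxE.
under [RHS]eq_bigr do rewrite mxE.
have [_ Htop] := size_prod_top (fun r => size_derivn_fpoly r (s r)).
have E : (\sum_(r < N) (d r - s r))%N = Wr_deg.
  have E1 : (\sum_(r < N) (d r - s r) + \sum_(r < N) s r = sum_dd)%N.
    rewrite /sum_dd -big_split /=; apply: eq_bigr => r _.
    by rewrite subnK // leqNgt Hall.
  rewrite /Wr_deg -(sum_perm_val s); lia.
by rewrite -E Htop; apply: eq_bigr => r _; exact: lead_derivn_fpoly.
Qed.

(* The matrix (d_i^(j)) is the transposed Vandermonde matrix of the d_i times the
   unitriangular change of basis from falling factorials to powers. *)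
Lemma det_ffact_neq0 : injective d ->
  \det (\matrix_(i < N, j < N) ((d i) ^_ j)%:R : 'M[R]_N) != 0.
Proof.
move=> Hinj.
pose a : 'rV[R]_N := \row_j (d j)%:R.
pose U : 'M[R]_N := \matrix_(k < N, j < N) (ffpoly R j)`_k.
have -> : \matrix_(i < N, j < N) ((d i) ^_ j)%:R = (Vandermonde N a)^T *m U.
  apply/matrixP => i j; rewrite !mxE -horner_ffpoly (@horner_coef_wide _ N); last first.
    by rewrite size_ffpoly.
  by apply: eq_bigr => k _; rewrite !mxE mulrC.
rewrite det_mulmx det_tr det_Vandermonde -det_tr det_trig; last first.
  by apply/is_trig_mxP => i j Hij; rewrite !mxE nth_default // size_ffpoly.
have -> : \prod_(i < N) U^T i i = 1.
  rewrite big1 // => i _; rewrite !mxE.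
  by have := monic_ffpoly R i; rewrite monicE /lead_coef size_ffpoly => /eqP.
rewrite mulr1.
apply/prodf_neq0 => i _; apply/prodf_neq0 => j Hij; rewrite !mxE subr_eq0.
apply/eqP => /natr_mpoly_inj/Hinj Eji; by move: Hij; rewrite Eji ltnn.
Qed.

Lemma size_Wr : injective d -> size (Wr lam) = Wr_deg.+1 /\ ('C(N, 2) <= sum_dd)%N.
Proof.
move=> Hinj.
have Htop : (Wr lam)`_Wr_deg != 0 by rewrite coef_Wr_deg det_ffact_neq0.
have Hs := size_coefD ord_max; rewrite coefD_max in Hs.
have Hge : (Wr_deg < size (Wr lam))%N.
  by rewrite ltnNge; apply: contra Htop => H; rewrite nth_default.
have := binS N 1; rewrite bin1; move: Hs Hge; rewrite /Wr_deg /=; lia.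
Qed.

Lemma size_numF i : injective d -> (1 <= i <= N)%N ->
  (size (numF lam i) <= size (Wr lam) - i)%N.
Proof.
move=> Hinj Hi; have [-> HS] := size_Wr Hinj; rewrite /numF.
apply: leq_trans (size_coefD _) _; rewrite inordK; last by lia.
have := binS N 1; rewrite bin1 /Wr_deg; lia.
Qed.

End Wronskian.

Section Generation.
Variables (N : nat) (lam : 'I_N -> nat).
Local Notation R := (Olam lam).
Local Notation f := (fpoly lam).
Local Notation d := (dd lam).
Variables (Hlam : is_partition lam) (F : nat -> nat -> R)
  (HF : forall i : nat, (1 <= i <= N)%N -> laurent_expansion (numF lam i) (Wr lam) (F i)).

Definition F_gens (q : R) : Prop :=
  exists i j : nat, [/\ (1 <= i <= N)%N, (i < j)%N & q = F i j].
Local Notation gen := (in_gen_subalg F_gens).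

Lemma gen_F i j : (1 <= i <= N)%N -> (i < j)%N -> gen (F i j).
Proof. by move=> Hi Hij; apply: gen_elem; exists i, j. Qed.

Lemma Wr_neq0 : Wr lam != 0.
Proof. by rewrite -size_poly_eq0 (proj1 (size_Wr (dd_inj Hlam))). Qed.

Lemma F_low i j : (1 <= i <= N)%N -> (1 <= j < i)%N -> F i j = 0.
Proof.
move=> Hi; apply: laurent_expansion_low (HF Hi) Wr_neq0 _.
exact: size_numF (dd_inj Hlam) Hi.
Qed.

(* u^M D with the F_i(u) replaced by their truncations *)
Definition trunc_op (M : nat) (p : {poly R}) : {poly R} :=
  'X^M * p^`(N) + \sum_(1 <= i < N.+1) laurent_trunc (F i) M * p^`(N - i).

Lemma trunc_opD M p q : trunc_op M (p + q) = trunc_op M p + trunc_op M q.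
Proof.
rewrite /trunc_op derivnD mulrDr addrACA; congr (_ + _).
by rewrite -big_split /=; apply: eq_bigr => i _; rewrite derivnD mulrDr.
Qed.

Lemma trunc_opZ M a p : trunc_op M (a *: p) = a *: trunc_op M p.
Proof.
rewrite /trunc_op derivnZ scalerDr scalerAr; congr (_ + _).
by rewrite scaler_sumr; apply: eq_bigr => i _; rewrite derivnZ scalerAr.
Qed.

Lemma trunc_op_sum M n (a : nat -> R) (p : nat -> {poly R}) :
  trunc_op M (\sum_(e < n) a e *: p e) = \sum_(e < n) a e *: trunc_op M (p e).
Proof.
elim: n => [|n IH]; last by rewrite !big_ord_recr /= trunc_opD IH trunc_opZ.
by rewrite !big_ord0 -(scale0r 0) trunc_opZ !scale0r.
Qed.

Lemma Wr_trunc_op t M : Wr lam * trunc_op M (f t) =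
  \sum_(1 <= i < N.+1) (Wr lam * laurent_trunc (F i) M - 'X^M * numF lam i) * (f t)^`(N - i).
Proof.
have E : Wr lam * (f t)^`(N) = - \sum_(1 <= i < N.+1) numF lam i * (f t)^`(N - i).
  by apply/eqP; rewrite -addr_eq0 Wr_D_fpoly.
rewrite /trunc_op mulrDr mulrA (mulrC (Wr lam)) -mulrA E mulrN !big_distrr -sumrN -big_split /=.
by apply: eq_bigr => i _; rewrite mulrBl !mulrA addrC.
Qed.

Lemma size_trunc_op_fpoly t M : (size (Wr lam) <= M)%N -> (size (trunc_op M (f t)) <= d t)%N.
Proof.
move=> HM; apply: (leq_size_mulKl Wr_neq0); rewrite Wr_trunc_op big_nat_cond.
apply: leq_size_sum => i /andP[/andP[H1 H2] _].
have Herr := size_laurent_trunc_err (HF (_ : (1 <= i <= N)%N)) HM.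
apply: leq_trans (size_polyMleq _ _) _.
have := size_derivn_fpoly lam t (N - i); have := Herr ltac:(lia).
move: (size (Wr lam * _ - _)%R) (size (f t)^`(N - i)) (size (Wr lam)); lia.
Qed.

(* 'X^M * _^`(N) sends 'X^(d_t - j) to degree trunc_exp t j, and M = trunc_deg j
   satisfies size W <= M and d_t <= trunc_exp t j, so trunc_op M (f t) has a
   zero coefficient there. *)
Definition trunc_deg (j : nat) := (size (Wr lam) + N + j)%N.
Definition trunc_exp (t : 'I_N) (j : nat) := (trunc_deg j + d t - N - j)%N.
Definition trunc_coef (t : 'I_N) (j e : nat) : R :=
  (trunc_op (trunc_deg j) 'X^e)`_(trunc_exp t j).

Lemma fpoly_expand t : f t = \sum_(e < (d t).+1) (f t)`_e *: 'X^e.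
Proof.
rewrite -poly_def; apply/polyP => k; rewrite coef_poly; case: ltnP => // H.
by rewrite nth_default //; apply: leq_trans (size_fpoly lam t) H.
Qed.

Lemma sum_coef_fpoly_trunc_coef t j : (j <= d t)%N ->
  \sum_(e < (d t).+1) (f t)`_e * trunc_coef t j e = 0.
Proof.
move=> Hj.
have L0 : (trunc_op (trunc_deg j) (f t))`_(trunc_exp t j) = 0.
  by apply: (leq_sizeP _ _ (size_trunc_op_fpoly t _)); rewrite /trunc_exp /trunc_deg; lia.
rewrite {1}fpoly_expand trunc_op_sum coef_sum in L0.
by rewrite -[RHS]L0; apply: eq_bigr => e _; rewrite coefZ.
Qed.

Definition ind_poly : {poly R} := indicial N (fun i => F i i).
Definition ind (m : nat) : R := ind_poly.[m%:R].

Lemma trunc_coef_diag t j : (j <= d t)%N -> trunc_coef t j (d t - j) = ind (d t - j).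
Proof.
move=> Hj; rewrite /trunc_coef /trunc_op /ind /ind_poly horner_indicial.
rewrite coefD coef_sum coefM_derivn_Xn; congr (_ + _).
  have [H|H] := leqP N (d t - j); last by rewrite ffact_small // !mul0r.
  rewrite ifT; last by rewrite /trunc_exp /trunc_deg; lia.
  rewrite coefXn (_ : (_ == _) = true) ?mulr1 //; apply/eqP; rewrite /trunc_exp /trunc_deg; lia.
rewrite big_nat_cond [RHS]big_nat_cond; apply: eq_bigr => i /andP[/andP[H1 H2] _].
rewrite coefM_derivn_Xn; have [H|H] := leqP (N - i) (d t - j); last by rewrite ffact_small // !mul0r.
rewrite ifT; last by rewrite /trunc_exp /trunc_deg; lia.
rewrite /laurent_trunc coef_poly ifT; last by rewrite /trunc_exp /trunc_deg; lia.
by congr (_ * F i _); rewrite /trunc_exp /trunc_deg; lia.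
Qed.

Lemma trunc_coef_low t j e : (j <= d t)%N -> (e < d t - j)%N -> trunc_coef t j e = 0.
Proof.
move=> Hj He; rewrite /trunc_coef /trunc_op coefD coef_sum coefM_derivn_Xn.
rewrite big_nat_cond big1 ?addr0; last first.
  move=> i /andP[/andP[H1 H2] _]; rewrite coefM_derivn_Xn.
  have [H|H] := leqP (N - i) e; last by rewrite ffact_small // !mul0r.
  case: ifP => Hc; last by rewrite mulr0.
  rewrite /laurent_trunc coef_poly; case: ifP => Hb; last by rewrite mulr0.
  rewrite F_low ?mulr0 //; move: Hc Hb; rewrite /trunc_exp /trunc_deg; lia.
have [H|H] := leqP N e; last by rewrite ffact_small // !mul0r.
case: ifP => Hc; last by rewrite mulr0.
rewrite coefXn (_ : (_ == _) = false) ?mulr0 //.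
by apply/negbTE/eqP; move: Hc; rewrite /trunc_exp /trunc_deg; lia.
Qed.

Lemma gen_trunc_coef_high t j e : (j <= d t)%N -> (d t - j < e)%N -> (e <= d t)%N ->
  gen (trunc_coef t j e).
Proof.
move=> Hj He Hed; rewrite /trunc_coef /trunc_op coefD coef_sum coefM_derivn_Xn.
apply: gen_add.
  apply: gen_mul; first exact: gen_natr.
  by case: ifP => _; rewrite ?coefXn; [exact: gen_natr|exact: gen0].
rewrite big_nat_cond; apply: gen_sum => i /andP[/andP[H1 H2] _]; rewrite coefM_derivn_Xn.
have [H|H] := leqP (N - i) e; last by rewrite ffact_small // !mul0r; exact: gen0.
case: ifP => Hc; last by rewrite mulr0; exact: gen0.
rewrite /laurent_trunc coef_poly; case: ifP => Hb; last by rewrite mulr0; exact: gen0.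
apply: gen_mul; first exact: gen_natr.
by apply: gen_F; [lia|move: Hc Hb; rewrite /trunc_exp /trunc_deg; lia].
Qed.

Lemma ind_dd t : ind (d t) = 0.
Proof.
have := @sum_coef_fpoly_trunc_coef t 0 (leq0n _).
rewrite (bigD1 (Ordinal (ltnSn (d t)))) //= big1 ?addr0.
  by rewrite lead_fpoly mul1r -{1}(subn0 (d t)) trunc_coef_diag // subn0.
move=> e He; rewrite trunc_coef_low ?mulr0 //.
have : nat_of_ord e != d t by apply: contraNneq He => E; apply/eqP; apply: val_inj.
by have := ltn_ord e; lia.
Qed.

Lemma ind_poly_prod : ind_poly = \prod_(t <- enum 'I_N) ('X - (d t)%:R%:P).
Proof.
rewrite -(big_map (fun t => (d t)%:R) xpredT (fun z => 'X - z%:P)).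
apply: indicial_prod_roots; first by rewrite size_map size_enum_ord.
  by apply/allP => z /mapP[t _ ->]; rewrite /root -/(ind (d t)) ind_dd.
rewrite map_inj_uniq ?enum_uniq // => a b /natr_mpoly_inj.
exact: (dd_inj Hlam).
Qed.

(* I(m) = prod_t (m - d_t): in particular the F_ii are scalars. *)
Lemma ind_const m : ~~ inP lam m -> exists2 k : Cplx, k != 0 & ind m = k%:MP.
Proof.
move=> Hm; exists (\prod_(t <- enum 'I_N) (m%:R - (d t)%:R)).
  rewrite prodf_seq_neq0; apply/allP => t _ /=; rewrite subr_eq0 Num.Theory.eqr_nat.
  by apply: contra Hm => /eqP E; apply/existsP; exists t; rewrite E.
rewrite /ind ind_poly_prod horner_prod rmorph_prod.
by apply: eq_bigr => t _; rewrite hornerXsubC rmorphB /= !mpolyC_nat.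
Qed.

Lemma gen_coef_fpoly t j : (j <= d t)%N -> forall e, (d t - j <= e)%N -> gen ((f t)`_e).
Proof.
elim: j => [|j IH] Hj e He.
  rewrite (coef_fpoly_high (_ : (d t <= e)%N)); last by lia.
  by case: (_ == _); [exact: gen1|exact: gen0].
have [He'|He'] := leqP (d t - j) e; first by apply: IH => //; lia.
rewrite (_ : e = (d t - j.+1)%N); last by lia.
have [Hin|Hnot] := boolP (inP lam (d t - j.+1)).
  rewrite coef_fpoly (_ : (_ == d t) = false) ?add0r; last by apply/negbTE/eqP; lia.
  rewrite big1; first exact: gen0.
  move=> -[[r k] Hv] /= /eqP Hr; subst r; have /andP[_ Hk] := Hv.
  by rewrite (_ : (_ == _) = false) ?mulr0 //; apply: contraNF Hk => /eqP <-.
have [k k0 Hk] := ind_const Hnot.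
have Hlt : (d t - j.+1 < (d t).+1)%N by lia.
have := sum_coef_fpoly_trunc_coef Hj.
rewrite (bigD1 (Ordinal Hlt)) //= trunc_coef_diag // Hk => /eqP; rewrite addr_eq0 => /eqP Hsolve.
have Hk_mul : gen ((f t)`_(d t - j.+1) * k%:MP).
  rewrite Hsolve; apply: gen_opp; apply: gen_sum => e2 He2.
  have He3 : nat_of_ord e2 != (d t - j.+1)%N.
    by apply: contraNneq He2 => E; apply/eqP; apply: val_inj.
  have := ltn_ord e2; have [Hc|Hc] := ltnP e2 (d t - j.+1) => Hel.
    by rewrite trunc_coef_low // mulr0; exact: gen0.
  apply: gen_mul; first by apply: IH; lia.
  by apply: gen_trunc_coef_high; lia.
have -> : (f t)`_(d t - j.+1) = k^-1%:MP * ((f t)`_(d t - j.+1) * k%:MP).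
  by rewrite mulrCA -rmorphM mulVf // rmorph1 mulr1.
exact: gen_mul (gen_const _ _) Hk_mul.
Qed.

Lemma gen_fvar (x : Idx lam) : gen (fvar x).
Proof.
case: x => [[t j] Hv]; have /andP[/= Hj0 _] := Hv.
pose x0 : Idx lam := exist _ (existT _ t j) Hv.
have Hjd := ltn_ord j.
suff <- : (f t)`_(d t - j) = fvar x0 by apply: (@gen_coef_fpoly t j).
rewrite coef_fpoly (_ : (_ == d t) = false) ?add0r; last by apply/negbTE/eqP; lia.
rewrite (bigD1 x0) //= eqxx mulr1 big1 ?addr0 // => -[[r k] Hv'] /andP[/eqP /= Hr Hne].
subst r; rewrite (_ : (_ == _) = false) ?mulr0 //; apply/negbTE.
apply: contra Hne => /eqP /= E; apply/eqP; apply: val_inj => /=.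
have Ekj : nat_of_ord k = j by have := ltn_ord k; lia.
by rewrite (val_inj Ekj).
Qed.

End Generation.

Theorem lemma3p4 (N : nat) (lam : 'I_N -> nat) (Hlam : is_partition lam)
  (F : nat -> nat -> Olam lam)
  (HF : forall i : nat, (1 <= i <= N)%N ->
          laurent_expansion (numF lam i) (Wr lam) (F i)) :
  forall p : Olam lam,
    in_gen_subalg
      (fun q => exists i j : nat, [/\ (1 <= i <= N)%N, (i < j)%N & q = F i j]) p.
Proof.
apply: gen_of_vars => v.
by have := gen_fvar Hlam HF (enum_val v); rewrite /fvar enum_valK.
Qed.
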